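(* Let $\mathscr A\subseteq\mathscr B\subseteq\mathscr C$ be full subcategories with inclusions $H\colon\mathscr A\to\mathscr B$ and $L\colon\mathscr B\to\mathscr C$ having left adjoints $I\colon\mathscr B\to\mathscr A$ and $J\colon\mathscr C\to\mathscr B$. Suppose $\Gamma_J=(\mathscr C,\mathscr B,J,L,\mathscr E_J,\mathscr Z_J)$ and $\Gamma_I=(\mathscr B,\mathscr A,I,H,\mathscr E_I,\mathscr Z_I)$ are admissible Galois structures with $J(\mathscr E_J)\subseteq\mathscr E_I$ and $H(\mathscr Z_I)\subseteq\mathscr Z_J$, and let $\Gamma=(\mathscr C,\mathscr A,IJ,LH,\mathscr E_J,\mathscr Z_I)$ be the composite (admissible) Galois structure. Assume moreover that every component of the unit of $J\dashv L$ is a descent morphism. Then for an extension $f\colon X\to Y$ in $\mathscr E_J$, the following are equivalent: (1) $f$ is a $\Gamma$-trivial extension; (2) $f$ is a $\Gamma_J$-trivial extension and $J(f)$ is a $\Gamma_I$-trivial extension.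
   Context: A Galois structure $(\mathscr C,\mathscr F,F,U,\mathscr E,\mathscr Z)$ consists of an adjunction $F\dashv U\colon\mathscr F\to\mathscr C$ (unit $\eta$) and classes $\mathscr E$, $\mathscr Z$ of morphisms of $\mathscr C$, $\mathscr F$, closed under composition, containing isomorphisms, stable under (existing) pullbacks along which all pullbacks exist, with $F(\mathscr E)\subseteq\mathscr Z$ and $U(\mathscr Z)\subseteq\mathscr E$. It induces, for each object $B$, an adjunction between the category $\mathscr E(B)$ of morphisms in $\mathscr E$ with codomain $B$ and $\mathscr Z(F(B))$: the left adjoint sends $f$ to $F(f)$, the right adjoint sends $\phi$ to the pullback of $U(\phi)$ along $\eta_B$. The structure is admissible if the counit of each of these adjunctions is an isomorphism. A morphism $f\colon X\to Y$ in $\mathscr E$ is a trivial extension if the naturality square $\eta_Y\circ f=UF(f)\circ\eta_X$ is a pullback. A descent morphism is a morphism $p$ whose change-of-base functor $p^*$ (pulling back along $p$) is precomonadic; in a category with finite limits these are the pullback-stable regular epimorphisms. *)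

From Stdlib Require Import Utf8.




Record Category := {
  Obj :> Type;
  Hom : Obj -> Obj -> Type;
  comp : forall {x y z : Obj}, Hom y z -> Hom x y -> Hom x z;
  id : forall x : Obj, Hom x x;
  comp_assoc : forall (w x y z : Obj) (f : Hom w x) (g : Hom x y) (h : Hom y z),
      comp h (comp g f) = comp (comp h g) f;
  comp_id_l : forall (x y : Obj) (f : Hom x y), comp (id y) f = f;
  comp_id_r : forall (x y : Obj) (f : Hom x y), comp f (id x) = f
}.
Arguments Hom {C} x y : rename.
Arguments comp {C x y z} g f : rename.
Arguments id {C} x : rename.
Arguments comp_assoc {C w x y z} f g h : rename.
Arguments comp_id_l {C x y} f : rename.
Arguments comp_id_r {C x y} f : rename.

Notation "g ∘ f" := (comp g f) (at level 40, left associativity).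

Definition IsIso {C : Category} {x y : C} (f : Hom x y) : Prop :=
  exists g : Hom y x, g ∘ f = id x /\ f ∘ g = id y.

(** The commutative square
        P --p2--> B0
        |         |
        p1        g
        v         v
        A0 --f--> D
    is a pullback (of f and g). *)
Definition IsPullback {C : Category} {P A0 B0 D : C}
    (p1 : Hom P A0) (p2 : Hom P B0) (f : Hom A0 D) (g : Hom B0 D) : Prop :=
  f ∘ p1 = g ∘ p2 /\
  forall (Q : C) (q1 : Hom Q A0) (q2 : Hom Q B0), f ∘ q1 = g ∘ q2 ->
    exists! u : Hom Q P, p1 ∘ u = q1 /\ p2 ∘ u = q2.

Record Functor (C D : Category) := {
  fobj :> C -> D;
  fmap : forall {x y : C}, Hom x y -> Hom (fobj x) (fobj y);
  fmap_id : forall x : C, fmap (id x) = id (fobj x);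
  fmap_comp : forall (x y z : C) (f : Hom x y) (g : Hom y z),
      fmap (g ∘ f) = fmap g ∘ fmap f
}.
Arguments fmap {C D} F {x y} f : rename.
Arguments fmap_id {C D} F x : rename.
Arguments fmap_comp {C D} F {x y z} f g : rename.

Definition FunctorComp {C D E : Category} (G : Functor D E) (F : Functor C D)
  : Functor C E.
Proof.
  refine {| fobj := fun x => G (F x);
            fmap := fun x y f => fmap G (fmap F f) |}.
  - intro x. rewrite !fmap_id. reflexivity.
  - intros x y z f g. rewrite !fmap_comp. reflexivity.
Defined.

Definition FullSub (C : Category) (P : C -> Prop) : Category.
Proof.
  refine {| Obj := { x : C | P x };
            Hom := fun x y => @Hom C (proj1_sig x) (proj1_sig y);
            comp := fun x y z g f => g ∘ f;
            id := fun x => id (proj1_sig x) |}.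
  - intros. apply comp_assoc.
  - intros. apply comp_id_l.
  - intros. apply comp_id_r.
Defined.

Definition Incl (C : Category) (P : C -> Prop) : Functor (FullSub C P) C.
Proof.
  refine {| fobj := fun x : FullSub C P => proj1_sig x;
            fmap := fun (x y : FullSub C P) (f : @Hom (FullSub C P) x y) => (f : @Hom C (proj1_sig x) (proj1_sig y)) |}.
  - reflexivity.
  - reflexivity.
Defined.

Record Adjunction {C D : Category} (F : Functor C D) (U : Functor D C) := {
  unit : forall x : C, Hom x (U (F x));
  counit : forall y : D, Hom (F (U y)) y;
  unit_nat : forall (x x' : C) (f : Hom x x'),
      unit x' ∘ f = fmap U (fmap F f) ∘ unit x;
  counit_nat : forall (y y' : D) (g : Hom y y'),
      g ∘ counit y = counit y' ∘ fmap F (fmap U g);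
  triangle_F : forall x : C, counit (F x) ∘ fmap F (unit x) = id (F x);
  triangle_U : forall y : D, fmap U (counit y) ∘ unit (U y) = id (U y)
}.
Arguments unit {C D F U} a x : rename.
Arguments counit {C D F U} a y : rename.
Arguments unit_nat {C D F U} a {x x'} f : rename.
Arguments counit_nat {C D F U} a {y y'} g : rename.
Arguments triangle_F {C D F U} a x : rename.
Arguments triangle_U {C D F U} a y : rename.

Definition AdjComp {C D E : Category} {F : Functor C D} {U : Functor D C}
    {F' : Functor D E} {U' : Functor E D}
    (a : Adjunction F U) (a' : Adjunction F' U')
  : Adjunction (FunctorComp F' F) (FunctorComp U U').
Proof.
  refine (@Build_Adjunction C E (FunctorComp F' F) (FunctorComp U U')
            (fun x => fmap U (unit a' (F x)) ∘ unit a x)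
            (fun z => counit a' z ∘ fmap F' (counit a (U' z))) _ _ _ _).
  - intros x x' f; simpl.
    rewrite <- comp_assoc, (unit_nat a f), comp_assoc, <- (fmap_comp U),
      (unit_nat a' (fmap F f)), (fmap_comp U), comp_assoc. reflexivity.
  - intros y y' g; simpl.
    rewrite comp_assoc, (counit_nat a' g), <- comp_assoc, <- (fmap_comp F'),
      (counit_nat a (fmap U' g)), (fmap_comp F'), comp_assoc. reflexivity.
  - intro x; simpl.
    rewrite (fmap_comp F), (fmap_comp F'), comp_assoc.
    rewrite <- (comp_assoc (fmap F' (fmap F (fmap U (unit a' (F x)))))).
    rewrite <- (fmap_comp F' (fmap F (fmap U (unit a' (F x))))).
    rewrite <- (counit_nat a (unit a' (F x))).
    rewrite (fmap_comp F'), comp_assoc, (triangle_F a'), comp_id_l,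
      <- (fmap_comp F'), (triangle_F a), fmap_id. reflexivity.
  - intro y; simpl.
    rewrite (fmap_comp U'), (fmap_comp U), comp_assoc.
    rewrite <- (comp_assoc (fmap U (unit a' (F (U (U' y)))))).
    rewrite <- (fmap_comp U (unit a' (F (U (U' y))))).
    rewrite <- (unit_nat a' (counit a (U' y))).
    rewrite (fmap_comp U), comp_assoc, <- (comp_assoc (unit a (U (U' y)))),
      (triangle_U a), comp_id_r, <- (fmap_comp U), (triangle_U a'), fmap_id.
    reflexivity.
Defined.

Definition MorClass (C : Category) := forall x y : C, Hom x y -> Prop.

Definition GoodClass {C : Category} (E : MorClass C) : Prop :=
  (forall (x y z : C) (f : Hom x y) (g : Hom y z),
      E _ _ f -> E _ _ g -> E _ _ (g ∘ f)) /\
  (forall (x y : C) (f : Hom x y), IsIso f -> E _ _ f) /\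
  (forall (A0 B0 : C) (e : Hom A0 B0), E _ _ e ->
     forall (D : C) (g : Hom D B0),
       (exists (P : C) (p1 : Hom P A0) (p2 : Hom P D), IsPullback p1 p2 e g) /\
       (forall (P : C) (p1 : Hom P A0) (p2 : Hom P D),
          IsPullback p1 p2 e g -> E _ _ p2)).

Definition IsGaloisStructure {C D : Category} {F : Functor C D}
    {U : Functor D C} (a : Adjunction F U) (E : MorClass C) (Z : MorClass D)
  : Prop :=
  GoodClass E /\ GoodClass Z /\
  (forall (x y : C) (f : Hom x y), E _ _ f -> Z _ _ (fmap F f)) /\
  (forall (x y : D) (g : Hom x y), Z _ _ g -> E _ _ (fmap U g)).

(** Admissibility: the counit of the induced adjunction
    E(B) ⇄ Z(F B) is an isomorphism.  For φ : Q -> F B in Z, the right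
    adjoint sends φ to the pullback (P, p1 : P -> B, p2 : P -> U Q) of U φ
    along η_B, and the counit at φ is  ε_Q ∘ F(p2) : F P -> Q
    (a morphism of Z(F B); it is an iso there iff it is an iso in D). *)
Definition Admissible {C D : Category} {F : Functor C D}
    {U : Functor D C} (a : Adjunction F U) (E : MorClass C) (Z : MorClass D)
  : Prop :=
  forall (B0 : C) (Q : D) (phi : Hom Q (F B0)), Z _ _ phi ->
    forall (P : C) (p1 : Hom P B0) (p2 : Hom P (U Q)),
      IsPullback p1 p2 (unit a B0) (fmap U phi) ->
      IsIso (counit a Q ∘ fmap F p2).

Definition TrivialExtension {C D : Category} {F : Functor C D}
    {U : Functor D C} (a : Adjunction F U) (E : MorClass C)
    {X Y : C} (f : Hom X Y) : Prop :=
  E _ _ f /\ IsPullback f (unit a X) (unit a Y) (fmap U (fmap F f)).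

(** * Descent morphisms.
    p : E0 -> B0 is a descent morphism when pullbacks along p exist and
    the change-of-base functor p^* : C/B0 -> C/E0 is pre(co)monadic
    in the standard sense of descent theory, i.e. the comparison functor
    from C/B0 to the category of algebras (descent data) for the monad
    p^* Σ_p induced by Σ_p ⊣ p^* is fully faithful.  Below this is
    written out concretely, for arbitrary choices of the pullbacks:
    - p^*(A, a) = (P, π1) where (P, π1 : P -> E0, π2 : P -> A) is a
      pullback of p and a;
    - for g : (A,a) -> (A',a') over B0, p^* g is the unique h : P -> P'
      with π1' ∘ h = π1 and π2' ∘ h = g ∘ π2;
    - the descent datum (algebra structure) on p^*(A,a) is
      ξ = p^*(π2) : Q -> P, where (Q, q1, q2) is a pullback of p and
      p ∘ π1 (so that (Q,q1) = p^* Σ_p (P,π1)), π1 ∘ ξ = q1, π2 ∘ ξ = π2 ∘ q2;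
    - h : P -> P' over E0 is an algebra morphism iff h ∘ ξ = ξ' ∘ T h,
      which (composing with the jointly monic π1', π2') is equivalent to
      π2' ∘ h ∘ ξ = π2' ∘ h ∘ q2. *)
Definition DescentMorphism {C : Category} {E0 B0 : C} (p : Hom E0 B0) : Prop :=
  (forall (A0 : C) (a : Hom A0 B0),
     exists (P : C) (pi1 : Hom P E0) (pi2 : Hom P A0), IsPullback pi1 pi2 p a) /\
  (forall (A0 A' : C) (a : Hom A0 B0) (a' : Hom A' B0)
          (P : C) (pi1 : Hom P E0) (pi2 : Hom P A0)
          (P' : C) (pi1' : Hom P' E0) (pi2' : Hom P' A'),
     IsPullback pi1 pi2 p a -> IsPullback pi1' pi2' p a' ->
     (* faithfulness of the comparison functor *)
     (forall (g1 g2 : Hom A0 A') (h : Hom P P'),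
        a' ∘ g1 = a -> a' ∘ g2 = a ->
        pi1' ∘ h = pi1 -> pi2' ∘ h = g1 ∘ pi2 -> pi2' ∘ h = g2 ∘ pi2 ->
        g1 = g2) /\
     (* fullness of the comparison functor *)
     (forall h : Hom P P',
        pi1' ∘ h = pi1 ->
        (forall (Q : C) (q1 : Hom Q E0) (q2 : Hom Q P) (xi : Hom Q P),
           IsPullback q1 q2 p (p ∘ pi1) ->
           pi1 ∘ xi = q1 -> pi2 ∘ xi = pi2 ∘ q2 ->
           pi2' ∘ h ∘ xi = pi2' ∘ h ∘ q2) ->
        exists g : Hom A0 A', a' ∘ g = a /\ pi2' ∘ h = g ∘ pi2)).

From Stdlib Require Import Utf8.

(* The unit of the composite adjunction at Y factors as η^J_Y followed by
   L(η^I_{JY}).  Pulling back η^I_{JY} along HIJ(f) gives φ : P -> JY in Z_J,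
   and since L preserves pullbacks, the composite square of f being a
   pullback makes X the pullback of Lφ along η^J_Y.  Admissibility of Γ_J
   then identifies JX with P through the counit; this says at once that the
   Γ_J-square of f is a pullback and that the Γ_I-square of J(f) is the
   pullback P.  The converse is pasting of pullbacks. *)

Section Pullbacks.
Context {C : Category}.

Lemma pullback_lift {P A B D Q : C} {p1 : Hom P A} {p2 : Hom P B}
    {f : Hom A D} {g : Hom B D} (q1 : Hom Q A) (q2 : Hom Q B) :
  IsPullback p1 p2 f g -> f ∘ q1 = g ∘ q2 ->
  exists u : Hom Q P, p1 ∘ u = q1 /\ p2 ∘ u = q2.
Proof.
  intros [_ Huniv] Hq. destruct (Huniv Q q1 q2 Hq) as [u [Hu _]]. now exists u.
Qed.

Lemma pullback_jointly_monic {P A B D Q : C} {p1 : Hom P A} {p2 : Hom P B}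
    {f : Hom A D} {g : Hom B D} (u v : Hom Q P) :
  IsPullback p1 p2 f g -> p1 ∘ u = p1 ∘ v -> p2 ∘ u = p2 ∘ v -> u = v.
Proof.
  intros [Hsq Huniv] H1 H2.
  assert (Hq : f ∘ (p1 ∘ v) = g ∘ (p2 ∘ v)) by now rewrite !comp_assoc, Hsq.
  destruct (Huniv Q (p1 ∘ v) (p2 ∘ v) Hq) as [w [_ Hw]].
  transitivity w; [symmetry|]; apply Hw; auto.
Qed.

Lemma pullback_intro {P A B D : C} (p1 : Hom P A) (p2 : Hom P B)
    (f : Hom A D) (g : Hom B D) :
  f ∘ p1 = g ∘ p2 ->
  (forall (Q : C) (q1 : Hom Q A) (q2 : Hom Q B), f ∘ q1 = g ∘ q2 ->
     exists u : Hom Q P, p1 ∘ u = q1 /\ p2 ∘ u = q2) ->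
  (forall (Q : C) (u v : Hom Q P), p1 ∘ u = p1 ∘ v -> p2 ∘ u = p2 ∘ v -> u = v) ->
  IsPullback p1 p2 f g.
Proof.
  intros Hsq Hex Hmono. split; [exact Hsq|].
  intros Q q1 q2 Hq. destruct (Hex Q q1 q2 Hq) as [u [H1 H2]].
  exists u. split; [auto|]. intros v [Hv1 Hv2]. apply Hmono; congruence.
Qed.

Lemma pullback_sym {P A B D : C} (p1 : Hom P A) (p2 : Hom P B)
    (f : Hom A D) (g : Hom B D) :
  IsPullback p1 p2 f g -> IsPullback p2 p1 g f.
Proof.
  intros pb. apply pullback_intro.
  - symmetry. apply pb.
  - intros Q q1 q2 Hq.
    destruct (pullback_lift q2 q1 pb (eq_sym Hq)) as [u [H1 H2]]. eauto.
  - intros Q u v H1 H2. exact (pullback_jointly_monic u v pb H2 H1).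
Qed.

(* In both lemmas below the squares are
       X --a--> X' --a'--> X''
       |f       |f'        |k
       Y --b--> Y' --b'--> Y''  *)
Lemma pullback_paste {X X' X'' Y Y' Y'' : C} (f : Hom X Y) (a : Hom X X')
    (b : Hom Y Y') (f' : Hom X' Y') (a' : Hom X' X'') (b' : Hom Y' Y'')
    (k : Hom X'' Y'') :
  IsPullback f a b f' -> IsPullback f' a' b' k ->
  IsPullback f (a' ∘ a) (b' ∘ b) k.
Proof.
  intros pbl pbr. apply pullback_intro.
  - rewrite <- comp_assoc, (proj1 pbl), comp_assoc, (proj1 pbr), comp_assoc.
    reflexivity.
  - intros Q q1 q2 Hq.
    rewrite <- comp_assoc in Hq.
    destruct (pullback_lift (b ∘ q1) q2 pbr Hq) as [v [Hv1 Hv2]].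
    destruct (pullback_lift q1 v pbl (eq_sym Hv1)) as [u [Hu1 Hu2]].
    exists u. split; [exact Hu1|]. now rewrite <- comp_assoc, Hu2.
  - intros Q u v H1 H2.
    apply (pullback_jointly_monic u v pbl H1).
    apply (pullback_jointly_monic _ _ pbr).
    + rewrite !comp_assoc, <- (proj1 pbl), <- !comp_assoc, H1. reflexivity.
    + rewrite !comp_assoc. exact H2.
Qed.

Lemma pullback_cancel {X X' X'' Y Y' Y'' : C} (f : Hom X Y) (a : Hom X X')
    (b : Hom Y Y') (f' : Hom X' Y') (a' : Hom X' X'') (b' : Hom Y' Y'')
    (k : Hom X'' Y'') :
  IsPullback f (a' ∘ a) (b' ∘ b) k -> IsPullback f' a' b' k ->
  f' ∘ a = b ∘ f -> IsPullback f a b f'.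
Proof.
  intros pbo pbr Hsq. apply pullback_intro.
  - symmetry. exact Hsq.
  - intros Q q1 q2 Hq.
    assert (Hq' : (b' ∘ b) ∘ q1 = k ∘ (a' ∘ q2)).
    { rewrite <- comp_assoc, Hq, comp_assoc, (proj1 pbr), comp_assoc.
      reflexivity. }
    destruct (pullback_lift q1 (a' ∘ q2) pbo Hq') as [u [Hu1 Hu2]].
    exists u. split; [exact Hu1|].
    apply (pullback_jointly_monic _ _ pbr).
    + rewrite comp_assoc, Hsq, <- comp_assoc, Hu1. exact Hq.
    + rewrite comp_assoc. exact Hu2.
  - intros Q u v H1 H2.
    apply (pullback_jointly_monic u v pbo H1).
    rewrite <- !comp_assoc, H2. reflexivity.
Qed.

Lemma pullback_iso_leg {P A B B' D : C} (p1 : Hom P A) (p2 : Hom P B')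
    (s : Hom B' B) (h : Hom A D) (k : Hom B D) (k' : Hom B' D) :
  IsIso s -> k ∘ s = k' -> IsPullback p1 (s ∘ p2) h k -> IsPullback p1 p2 h k'.
Proof.
  intros [s' [Hs's Hss']] Hk pb. subst k'.
  assert (Hcancel : forall (Q : C) (x : Hom Q B'), s' ∘ (s ∘ x) = x).
  { intros Q x. now rewrite comp_assoc, Hs's, comp_id_l. }
  apply pullback_intro.
  - rewrite (proj1 pb), comp_assoc. reflexivity.
  - intros Q q1 q2 Hq.
    rewrite <- comp_assoc in Hq.
    destruct (pullback_lift q1 (s ∘ q2) pb Hq) as [u [Hu1 Hu2]].
    exists u. split; [exact Hu1|].
    rewrite <- (Hcancel _ (p2 ∘ u)), <- (Hcancel _ q2), <- Hu2, (comp_assoc u p2 s).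
    reflexivity.
  - intros Q u v H1 H2.
    apply (pullback_jointly_monic u v pb H1).
    rewrite <- !comp_assoc, H2. reflexivity.
Qed.

Lemma pullback_precomp_iso {P P' A B D : C} (t : Hom P' P) (p1 : Hom P A)
    (p2 : Hom P B) (h : Hom A D) (k : Hom B D) :
  IsIso t -> IsPullback p1 p2 h k -> IsPullback (p1 ∘ t) (p2 ∘ t) h k.
Proof.
  intros [t' [Ht't Htt']] pb.
  assert (Hcancel : forall (Z : C) (x : Hom P Z), (x ∘ t) ∘ t' = x).
  { intros Z x. now rewrite <- comp_assoc, Htt', comp_id_r. }
  apply pullback_intro.
  - rewrite !comp_assoc, (proj1 pb). reflexivity.
  - intros Q q1 q2 Hq.
    destruct (pullback_lift q1 q2 pb Hq) as [u [Hu1 Hu2]].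
    exists (t' ∘ u). rewrite !comp_assoc, !Hcancel. auto.
  - intros Q u v H1 H2.
    assert (Htu : t ∘ u = t ∘ v).
    { apply (pullback_jointly_monic _ _ pb); rewrite !comp_assoc; assumption. }
    rewrite <- (comp_id_l u), <- (comp_id_l v), <- Ht't, <- !comp_assoc, Htu.
    reflexivity.
Qed.

End Pullbacks.

Lemma fmap_iso {C D : Category} (F : Functor C D) {x y : C} (f : Hom x y) :
  IsIso f -> IsIso (fmap F f).
Proof.
  intros [g [Hgf Hfg]]. exists (fmap F g).
  rewrite <- !fmap_comp, Hgf, Hfg, !fmap_id. auto.
Qed.

Section Adjunction.
Context {C D : Category} {F : Functor C D} {U : Functor D C} (adj : Adjunction F U).

Definition transpose {x : C} {y : D} (g : Hom x (U y)) : Hom (F x) y :=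
  counit adj y ∘ fmap F g.

Lemma transposeK {x : C} {y : D} (g : Hom x (U y)) :
  fmap U (transpose g) ∘ unit adj x = g.
Proof.
  unfold transpose.
  rewrite fmap_comp, <- comp_assoc, <- unit_nat, comp_assoc, triangle_U, comp_id_l.
  reflexivity.
Qed.

Lemma unit_transpose_inj {x : C} {y : D} (h h' : Hom (F x) y) :
  fmap U h ∘ unit adj x = fmap U h' ∘ unit adj x -> h = h'.
Proof.
  assert (Hh : forall h0 : Hom (F x) y, transpose (fmap U h0 ∘ unit adj x) = h0).
  { intro h0. unfold transpose.
    rewrite fmap_comp, comp_assoc, <- counit_nat, <- comp_assoc, triangle_F, comp_id_r.
    reflexivity. }
  intro H. now rewrite <- (Hh h), <- (Hh h'), H.
Qed.

Lemma fmap_radj_pullback {P A B Z : D} (p1 : Hom P A) (p2 : Hom P B)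
    (f : Hom A Z) (g : Hom B Z) :
  IsPullback p1 p2 f g -> IsPullback (fmap U p1) (fmap U p2) (fmap U f) (fmap U g).
Proof.
  intros pb. apply pullback_intro.
  - rewrite <- !fmap_comp, (proj1 pb). reflexivity.
  - intros Q q1 q2 Hq.
    assert (Ht : f ∘ transpose q1 = g ∘ transpose q2).
    { apply unit_transpose_inj.
      rewrite !fmap_comp, <- !comp_assoc, !transposeK. exact Hq. }
    destruct (pullback_lift _ _ pb Ht) as [w [Hw1 Hw2]].
    exists (fmap U w ∘ unit adj Q).
    rewrite !comp_assoc, <- !fmap_comp, Hw1, Hw2, !transposeK. auto.
  - intros Q u v H1 H2.
    rewrite <- (transposeK u), <- (transposeK v).
    f_equal. f_equal.
    apply (pullback_jointly_monic _ _ pb); apply unit_transpose_inj;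
      rewrite !fmap_comp, <- !comp_assoc, !transposeK; assumption.
Qed.

Lemma admissible_pullback_iso (E : MorClass C) (Z : MorClass D)
    (adm : Admissible adj E Z) {X Y : C} {Q : D} (phi : Hom Q (F Y))
    (f : Hom X Y) (g : Hom X (U Q)) :
  Z _ _ phi -> IsPullback f g (unit adj Y) (fmap U phi) ->
  exists t : Hom (F X) Q,
    IsIso t /\ phi ∘ t = fmap F f /\ fmap U t ∘ unit adj X = g.
Proof.
  intros Hphi pb. exists (transpose g). split; [|split].
  - exact (adm Y Q phi Hphi X f g pb).
  - apply unit_transpose_inj.
    rewrite fmap_comp, <- comp_assoc, transposeK, <- (proj1 pb), unit_nat.
    reflexivity.
  - apply transposeK.
Qed.

End Adjunction.

Section CompositeGaloisStructure.
Context {C D E : Category} {F : Functor C D} {U : Functor D C}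
  {F' : Functor D E} {U' : Functor E D}
  (adj : Adjunction F U) (adj' : Adjunction F' U').
Context (E1 : MorClass C) (Z1 : MorClass D) (E2 : MorClass D).

Theorem composite_trivial_extension_iff {X Y : C} (f : Hom X Y) :
  Admissible adj E1 Z1 -> GoodClass Z1 ->
  E1 _ _ f -> E2 _ _ (fmap F f) -> Z1 _ _ (fmap U' (fmap F' (fmap F f))) ->
  TrivialExtension (AdjComp adj adj') E1 f <->
  (TrivialExtension adj E1 f /\ TrivialExtension adj' E2 (fmap F f)).
Proof.
  intros adm [_ [_ Z1_pb]] Hf HFf HUFFf. split.
  - intros [_ pbo]. cbn in pbo.
    destruct (Z1_pb _ _ _ HUFFf _ (unit adj' (F Y)))
      as [[P [q1 [q2 pbq]]] Z1_pb_leg].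
    pose proof (Z1_pb_leg _ _ _ pbq) as Z1_q2.
    apply pullback_sym in pbq.
    pose proof (fmap_radj_pullback adj _ _ _ _ pbq) as pbUq.
    assert (Hsq : fmap U (unit adj' (F Y)) ∘ (unit adj Y ∘ f)
                  = fmap U (fmap U' (fmap F' (fmap F f)))
                    ∘ (fmap U (unit adj' (F X)) ∘ unit adj X)).
    { rewrite comp_assoc. exact (proj1 pbo). }
    destruct (pullback_lift _ _ pbUq Hsq) as [g [Hg2 Hg1]].
    assert (pbg : IsPullback f g (unit adj Y) (fmap U q2)).
    { rewrite <- Hg1 in pbo. exact (pullback_cancel _ _ _ _ _ _ _ pbo pbUq Hg2). }
    destruct (admissible_pullback_iso adj E1 Z1 adm q2 f g Z1_q2 pbg)
      as [t [Ht [Hq2t Hgt]]].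
    assert (Hq1t : q1 ∘ t = unit adj' (F X)).
    { apply (unit_transpose_inj adj).
      rewrite fmap_comp, <- comp_assoc, Hgt. exact Hg1. }
    split; split; try assumption.
    + apply (pullback_iso_leg f (unit adj X) (fmap U t) _ (fmap U q2)).
      * exact (fmap_iso U t Ht).
      * rewrite <- fmap_comp, Hq2t. reflexivity.
      * rewrite Hgt. exact pbg.
    + pose proof (pullback_precomp_iso t _ _ _ _ Ht pbq) as pbt.
      rewrite Hq2t, Hq1t in pbt. exact pbt.
  - intros [[_ pbl] [_ pbr]]. split; [exact Hf|].
    exact (pullback_paste _ _ _ _ _ _ _ pbl (fmap_radj_pullback adj _ _ _ _ pbr)).
Qed.

End CompositeGaloisStructure.

Theorem lemma6p1
  (C : Category) (PB : C -> Prop) (PA : FullSub C PB -> Prop)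
  (J : Functor C (FullSub C PB))
  (I : Functor (FullSub C PB) (FullSub (FullSub C PB) PA))
  (adjJ : Adjunction J (Incl C PB))
  (adjI : Adjunction I (Incl (FullSub C PB) PA))
  (EJ : MorClass C) (ZJ : MorClass (FullSub C PB))
  (EI : MorClass (FullSub C PB)) (ZI : MorClass (FullSub (FullSub C PB) PA))
  (GJ : IsGaloisStructure adjJ EJ ZJ) (AJ : Admissible adjJ EJ ZJ)
  (GI : IsGaloisStructure adjI EI ZI) (AI : Admissible adjI EI ZI)
  (hJE : forall (x y : C) (f : Hom x y), EJ _ _ f -> EI _ _ (fmap J f))
  (hHZ : forall (x y : FullSub (FullSub C PB) PA) (g : Hom x y),
      ZI _ _ g -> ZJ _ _ (fmap (Incl (FullSub C PB) PA) g))
  (hdesc : forall x : C, DescentMorphism (unit adjJ x))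
  (X Y : C) (f : Hom X Y) (hf : EJ _ _ f) :
  TrivialExtension (AdjComp adjJ adjI) EJ f <->
  (TrivialExtension adjJ EJ f /\ TrivialExtension adjI EI (fmap J f)).
Proof.
  destruct GJ as [_ [GZJ _]], GI as [_ [_ [IZ _]]].
  apply (composite_trivial_extension_iff adjJ adjI EJ ZJ EI f AJ GZJ hf).
  - exact (hJE _ _ f hf).
  - exact (hHZ _ _ _ (IZ _ _ _ (hJE _ _ f hf))).
Qed.
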